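(* Let $\epsilon>0$ and $R\ge 0$, and set $\Lambda(\epsilon,R)=\frac{4}{\epsilon}+2R$. Let $[v_1v_2]$ be a geodesic segment in $\mathbb{H}^n$ with midpoint $m$, and let $s$ be an isometric involution of $\mathbb{H}^n$ such that $d(v_1,s(v_1))\le R$ and $d(v_2,s(v_2))\le R$. If $d(v_1,v_2)\ge \Lambda(\epsilon,R)$, then $d(m,s(m))\le\epsilon$.
   Context: $\mathbb{H}^n$ is real hyperbolic $n$-space with its hyperbolic metric $d$; an isometric involution is an isometry $s$ with $s^2=\mathrm{id}$. *)

From Stdlib Require Import Reals.
Open Scope R_scope.

Fixpoint sumR (f : nat -> R) (k : nat) : R :=
  match k with O => 0 | S k' => sumR f k' + f k' end.

Definition mink (n : nat) (x y : nat -> R) : R :=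
  - (x 0%nat * y 0%nat) + sumR (fun i => x (S i) * y (S i)) n.

(* upper sheet of the hyperboloid; coordinates beyond n are fixed to 0
   so that each point of H^n has a unique representative *)
Definition on_hyperboloid (n : nat) (x : nat -> R) : Prop :=
  mink n x x = -1 /\ 0 < x 0%nat /\ (forall k, (n < k)%nat -> x k = 0).

Definition Hn (n : nat) : Type := { x : nat -> R | on_hyperboloid n x }.

Definition arcosh (t : R) : R := ln (t + sqrt (t * t - 1)).

Definition hdist {n : nat} (x y : Hn n) : R :=
  arcosh (- mink n (proj1_sig x) (proj1_sig y)).

Definition is_isometry {n : nat} (s : Hn n -> Hn n) : Prop :=
  forall x y, hdist (s x) (s y) = hdist x y.

Definition is_involution {n : nat} (s : Hn n -> Hn n) : Prop :=
  forall x, s (s x) = x.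

(* m is the midpoint of the geodesic segment [v1 v2]
   (H^n is uniquely geodesic, so this determines m) *)
Definition is_midpoint {n : nat} (v1 v2 m : Hn n) : Prop :=
  hdist v1 m = hdist v1 v2 / 2 /\ hdist m v2 = hdist v1 v2 / 2.

Definition Lambda (eps R0 : R) : R := 4 / eps + 2 * R0.

(* We work in the hyperboloid model, where [cosh d(p,q) = -<p,q>] for the
   Minkowski form [<.,.>].  The proof has three ingredients.
   1. Linear algebra of the Minkowski form: bilinearity, reverse Cauchy-Schwarz
      for future timelike vectors, and the fact that a null vector orthogonal to
      a timelike one vanishes.  From these, the midpoint [m] of [v1 v2] is the
      normalized sum [(v1 + v2) / (2 cosh(L/2))], where [L = d(v1,v2)].
   2. Geometry: expanding [<m, s m>] with this formula expresses [cosh d(m, s m)]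
      through the four cross distances between [v1, v2] and [s v1, s v2]; since
      [s] is an involutive isometry, [d(v1, s v2) = d(v2, s v1)], and reverse
      Cauchy-Schwarz for [v1 + s v2] and [s v1 + v2] bounds this cross term by
      the endpoint displacements.  The result is
        [cosh d(m, s m) <= 1 + (cosh d(v1,s v1) + cosh d(v2,s v2) - 2) / (2 cosh^2(L/2))].
   3. Calculus: if [L >= 4/eps + 2 R0], the right-hand side is at most [cosh eps],
      and [cosh] is increasing on [0, +oo). *)

From Stdlib Require Import Reals Lra Lia Psatz.
Open Scope R_scope.

Lemma sumR_ext (f g : nat -> R) (k : nat) :
  (forall i, (i < k)%nat -> f i = g i) -> sumR f k = sumR g k.
Proof.
  induction k as [|k IH]; simpl; intros Hfg; [reflexivity|].
  rewrite IH by (intros; apply Hfg; lia).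
  rewrite Hfg by lia. reflexivity.
Qed.

Lemma sumR_lin (a b : R) (f g : nat -> R) (k : nat) :
  sumR (fun i => a * f i + b * g i) k = a * sumR f k + b * sumR g k.
Proof. induction k as [|k IH]; simpl; [ring | rewrite IH; ring]. Qed.

Lemma sumR_nonneg (f : nat -> R) (k : nat) :
  (forall i, 0 <= f i) -> 0 <= sumR f k.
Proof. intros Hf; induction k as [|k IH]; simpl; [lra | specialize (Hf k); lra]. Qed.

Lemma cauchy_schwarz_step (S X Y a b : R) :
  0 <= X -> 0 <= Y -> S * S <= X * Y ->
  (S + a * b) * (S + a * b) <= (X + a * a) * (Y + b * b).
Proof.
  intros HX HY HS.
  assert (Hcross : 2 * S * a * b <= X * (b * b) + a * a * Y).
  { destruct (Req_dec X 0) as [->|HX0].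
    - assert (S = 0) as -> by nra. nra.
    - assert (Hsq : 0 <= (X * b - S * a) * (X * b - S * a) + a * a * (X * Y - S * S))
        by (pose proof (Rle_0_sqr (X * b - S * a)); pose proof (Rle_0_sqr a);
            unfold Rsqr in *; nra).
      apply (Rmult_le_reg_l X); nra. }
  nra.
Qed.

Lemma sumR_cauchy_schwarz (f g : nat -> R) (k : nat) :
  sumR (fun i => f i * g i) k * sumR (fun i => f i * g i) k
  <= sumR (fun i => f i * f i) k * sumR (fun i => g i * g i) k.
Proof.
  induction k as [|k IH]; simpl; [lra|].
  apply cauchy_schwarz_step; auto; apply sumR_nonneg; intros; nra.
Qed.

Definition spatial (n : nat) (x y : nat -> R) : R := sumR (fun i => x (S i) * y (S i)) n.

Definition vcomb (a : R) (x : nat -> R) (b : R) (y : nat -> R) : nat -> R :=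
  fun k => a * x k + b * y k.

Lemma mink_spatial (n : nat) (x y : nat -> R) :
  mink n x y = - (x 0%nat * y 0%nat) + spatial n x y.
Proof. reflexivity. Qed.

Lemma spatial_nonneg (n : nat) (x : nat -> R) : 0 <= spatial n x x.
Proof. apply sumR_nonneg; intros; nra. Qed.

Lemma spatial_cauchy_schwarz (n : nat) (x y : nat -> R) :
  spatial n x y * spatial n x y <= spatial n x x * spatial n y y.
Proof. apply (sumR_cauchy_schwarz (fun i => x (S i)) (fun i => y (S i))). Qed.

Lemma mink_sym (n : nat) (x y : nat -> R) : mink n x y = mink n y x.
Proof.
  rewrite !mink_spatial; unfold spatial.
  rewrite (sumR_ext _ (fun i => y (S i) * x (S i))) by (intros; ring). ring.
Qed.

Lemma mink_vcomb (n : nat) (a b : R) (x y z : nat -> R) :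
  mink n (vcomb a x b y) z = a * mink n x z + b * mink n y z.
Proof.
  rewrite !mink_spatial; unfold spatial, vcomb.
  rewrite (sumR_ext _ (fun i => a * (x (S i) * z (S i)) + b * (y (S i) * z (S i))))
    by (intros; ring).
  rewrite sumR_lin. ring.
Qed.

Lemma mink_vcomb_r (n : nat) (a b : R) (x y z : nat -> R) :
  mink n z (vcomb a x b y) = a * mink n z x + b * mink n z y.
Proof. rewrite !(mink_sym n z). apply mink_vcomb. Qed.

Lemma mink_reverse_cauchy_schwarz (n : nat) (x y : nat -> R) (A : R) :
  0 < x 0%nat -> 0 < y 0%nat -> 0 <= A ->
  mink n x x = - A -> mink n y y = - A -> mink n x y <= - A.
Proof.
  rewrite !mink_spatial. intros Hx Hy HA Hxx Hyy.
  pose proof (spatial_cauchy_schwarz n x y) as Hcs.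
  pose proof (spatial_nonneg n x) as HX. pose proof (spatial_nonneg n y) as HY.
  set (P := spatial n x y) in *. set (X := spatial n x x) in *. set (Y := spatial n y y) in *.
  assert (Ham : 2 * P <= X + Y).
  { destruct (Rle_dec (2 * P) (X + Y)); [assumption|].
    pose proof (Rle_0_sqr (X - Y)). unfold Rsqr in *. nra. }
  assert (Htime : (x 0%nat * y 0%nat) * (x 0%nat * y 0%nat) = (X + A) * (Y + A)) by nra.
  destruct (Rle_dec (P + A) 0) as [Hle|Hgt]; [nra|].
  assert (Hprod : (P + A) * (P + A) <= (x 0%nat * y 0%nat) * (x 0%nat * y 0%nat)) by nra.
  assert (0 < x 0%nat * y 0%nat) by (apply Rmult_lt_0_compat; lra).
  nra.
Qed.

(* A null vector orthogonal to a timelike vector is zero (as a functional);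
   this is what makes geodesic midpoints unique. *)
Lemma mink_null_orthogonal (n : nat) (x w : nat -> R) :
  mink n x x < 0 -> mink n w x = 0 -> mink n w w = 0 ->
  forall y, mink n w y = 0.
Proof.
  rewrite !mink_spatial. intros Hx Hwx Hww y.
  pose proof (spatial_cauchy_schwarz n w x). pose proof (spatial_nonneg n x).
  assert (Hw0 : w 0%nat = 0).
  { destruct (Req_dec (w 0%nat) 0) as [|Hne]; [assumption|].
    assert (0 < w 0%nat * w 0%nat) by (apply Rsqr_pos_lt in Hne; exact Hne). nra. }
  rewrite Hw0 in Hww.
  pose proof (spatial_cauchy_schwarz n w y). pose proof (spatial_nonneg n y).
  rewrite mink_spatial, Hw0. nra.
Qed.

Lemma cosh_sinh_half (x : R) : cosh x = 1 + 2 * sinh (x / 2) ^ 2.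
Proof.
  unfold cosh, sinh.
  replace x with (x / 2 + x / 2) at 1 by field.
  replace (- x) with (- (x / 2) + - (x / 2)) by field.
  rewrite !exp_plus, exp_Ropp.
  pose proof (exp_pos (x / 2)). field. lra.
Qed.

Lemma cosh_ge_1 (x : R) : 1 <= cosh x.
Proof. rewrite cosh_sinh_half. pose proof (pow2_ge_0 (sinh (x / 2))). lra. Qed.

Lemma cosh_double (y : R) : cosh (2 * y) = 2 * cosh y ^ 2 - 1.
Proof.
  unfold cosh. replace (2 * y) with (y + y) by ring.
  rewrite !exp_Ropp, exp_plus. pose proof (exp_pos y). field. lra.
Qed.

Lemma sinh_nonneg (x : R) : 0 <= x -> 0 <= sinh x.
Proof.
  intros [Hx | <-]; [rewrite <- sinh_0; left; apply sinh_lt; exact Hx | rewrite sinh_0; lra].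
Qed.

Lemma cosh_lt_mono (a b : R) : 0 <= a -> a < b -> cosh a < cosh b.
Proof.
  intros Ha Hab. rewrite !cosh_sinh_half.
  pose proof (sinh_nonneg (a / 2) ltac:(lra)).
  pose proof (sinh_lt (a / 2) (b / 2) ltac:(lra)).
  nra.
Qed.

Lemma cosh_le_mono (a b : R) : 0 <= a -> a <= b -> cosh a <= cosh b.
Proof. intros Ha [Hab | <-]; [left; apply cosh_lt_mono | right]; auto. Qed.

Lemma cosh_le_reflect (a b : R) : 0 <= a -> 0 <= b -> cosh a <= cosh b -> a <= b.
Proof.
  intros Ha Hb Hc. destruct (Rle_dec a b) as [|Hba]; [assumption|].
  pose proof (cosh_lt_mono b a Hb ltac:(lra)). lra.
Qed.

Lemma cosh_arcosh (t : R) : 1 <= t -> cosh (arcosh t) = t.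
Proof.
  intros Ht. unfold arcosh.
  assert (Hr2 : sqrt (t * t - 1) * sqrt (t * t - 1) = t * t - 1) by (apply sqrt_sqrt; nra).
  pose proof (sqrt_pos (t * t - 1)).
  unfold cosh. rewrite exp_Ropp, exp_ln by lra.
  field_simplify_eq; [nra | lra].
Qed.

Lemma arcosh_nonneg (t : R) : 1 <= t -> 0 <= arcosh t.
Proof.
  intros Ht. unfold arcosh. rewrite <- ln_1.
  pose proof (sqrt_pos (t * t - 1)).
  destruct (Req_dec (t + sqrt (t * t - 1)) 1) as [-> | Hne]; [lra|].
  left. apply ln_increasing; lra.
Qed.

Definition pt {n : nat} (p : Hn n) : nat -> R := proj1_sig p.

Lemma pt_mink {n : nat} (p : Hn n) : mink n (pt p) (pt p) = -1.
Proof. exact (proj1 (proj2_sig p)). Qed.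

Lemma pt_pos {n : nat} (p : Hn n) : 0 < pt p 0%nat.
Proof. exact (proj1 (proj2 (proj2_sig p))). Qed.

Lemma mink_pts_le {n : nat} (p q : Hn n) : mink n (pt p) (pt q) <= -1.
Proof.
  pose proof (pt_mink p). pose proof (pt_mink q).
  apply (mink_reverse_cauchy_schwarz n _ _ 1); auto using pt_pos; lra.
Qed.

Lemma cosh_hdist {n : nat} (p q : Hn n) : cosh (hdist p q) = - mink n (pt p) (pt q).
Proof. apply cosh_arcosh. pose proof (mink_pts_le p q). unfold pt in *. lra. Qed.

Lemma hdist_nonneg {n : nat} (p q : Hn n) : 0 <= hdist p q.
Proof. apply arcosh_nonneg. pose proof (mink_pts_le p q). unfold pt in *. lra. Qed.

Lemma hdist_sym {n : nat} (p q : Hn n) : hdist p q = hdist q p.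
Proof. unfold hdist. rewrite mink_sym. reflexivity. Qed.

Lemma isometry_midpoint {n : nat} (s : Hn n -> Hn n) (p q r : Hn n) :
  is_isometry s -> is_midpoint p q r -> is_midpoint (s p) (s q) (s r).
Proof. intros Hs [Hpr Hrq]. split; rewrite !Hs; assumption. Qed.

(* The midpoint of [p q] is the normalized sum [(p + q) / (2 cosh(d(p,q)/2))]:
   [r - (p+q)/(2h)] is null and orthogonal to the timelike [r], hence zero. *)
Lemma midpoint_form {n : nat} (p q r : Hn n) : is_midpoint p q r ->
  forall y, mink n (pt r) y
            = (mink n (pt p) y + mink n (pt q) y) / (2 * cosh (hdist p q / 2)).
Proof.
  intros [Hpr Hrq] y.
  set (h := cosh (hdist p q / 2)).
  assert (Epr : mink n (pt p) (pt r) = - h)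
    by (pose proof (cosh_hdist p r) as E; rewrite Hpr in E; fold h in E; lra).
  assert (Erq : mink n (pt r) (pt q) = - h)
    by (pose proof (cosh_hdist r q) as E; rewrite Hrq in E; fold h in E; lra).
  assert (Epq : mink n (pt p) (pt q) = - (2 * h ^ 2 - 1)).
  { pose proof (cosh_hdist p q) as E.
    replace (hdist p q) with (2 * (hdist p q / 2)) in E by field.
    rewrite cosh_double in E. fold h in E. lra. }
  assert (Hh : 1 <= h) by apply cosh_ge_1.
  pose proof (pt_mink p) as Epp. pose proof (pt_mink q) as Eqq. pose proof (pt_mink r) as Err.
  set (c := / (2 * h)).
  set (u := vcomb c (pt p) c (pt q)).
  set (w := vcomb 1 (pt r) (-1) u).
  assert (Eur : mink n u (pt r) = -1).
  { unfold u. rewrite mink_vcomb, (mink_sym n (pt q)), Epr, Erq. unfold c. field. lra. }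
  assert (Euu : mink n u u = -1).
  { unfold u at 1. rewrite mink_vcomb, (mink_sym n (pt p)), (mink_sym n (pt q)).
    unfold u. rewrite !mink_vcomb, Epp, Eqq, Epq, (mink_sym n (pt q)), Epq.
    unfold c. field. lra. }
  assert (Ewr : mink n w (pt r) = 0) by (unfold w; rewrite mink_vcomb, Eur, Err; ring).
  assert (Eww : mink n w w = 0).
  { unfold w at 1. rewrite mink_vcomb, (mink_sym n (pt r)), (mink_sym n u).
    unfold w. rewrite !mink_vcomb, Err, Euu, Eur, (mink_sym n (pt r) u), Eur. ring. }
  pose proof (mink_null_orthogonal n (pt r) w ltac:(lra) Ewr Eww y) as Hwy.
  unfold w, u in Hwy. rewrite !mink_vcomb in Hwy. unfold c in Hwy.
  unfold Rdiv. lra.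
Qed.

Lemma cosh_dist_midpoints {n : nat} (p q m p' q' m' : Hn n) :
  is_midpoint p q m -> is_midpoint p' q' m' -> hdist p' q' = hdist p q ->
  cosh (hdist m m')
  = (cosh (hdist p p') + cosh (hdist p q') + cosh (hdist q p') + cosh (hdist q q'))
    / (4 * cosh (hdist p q / 2) ^ 2).
Proof.
  intros Hm Hm' Hpq.
  pose proof (cosh_ge_1 (hdist p q / 2)) as Hh.
  rewrite !cosh_hdist, (midpoint_form p q m Hm), (mink_sym n (pt p)), (mink_sym n (pt q)),
    !(midpoint_form p' q' m' Hm'), Hpq, !(mink_sym n (pt p')), !(mink_sym n (pt q')).
  field. lra.
Qed.

(* Quadrilateral inequality: if the diagonals [ad] and [bc] have equal length,
   [2 + 2 cosh d(a,d)] is at most the sum of cosh of the four sides; this is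
   reverse Cauchy-Schwarz applied to [a + d] and [c + b]. *)
Lemma cosh_diagonal_ineq {n : nat} (a b c d : Hn n) : hdist a d = hdist b c ->
  2 + 2 * cosh (hdist a d)
  <= cosh (hdist a b) + cosh (hdist a c) + cosh (hdist d b) + cosh (hdist d c).
Proof.
  intros Hdiag.
  set (x := vcomb 1 (pt a) 1 (pt d)).
  set (y := vcomb 1 (pt c) 1 (pt b)).
  assert (Ebc : cosh (hdist c b) = cosh (hdist a d)) by now rewrite hdist_sym, Hdiag.
  rewrite !cosh_hdist in *.
  pose proof (pt_mink a). pose proof (pt_mink b). pose proof (pt_mink c). pose proof (pt_mink d).
  assert (Exy : mink n x y <= - (2 + 2 * - mink n (pt a) (pt d))).
  { apply mink_reverse_cauchy_schwarz.
    - unfold x, vcomb. pose proof (pt_pos a). pose proof (pt_pos d). lra.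
    - unfold y, vcomb. pose proof (pt_pos c). pose proof (pt_pos b). lra.
    - pose proof (mink_pts_le a d). lra.
    - unfold x. rewrite mink_vcomb, !mink_vcomb_r, (mink_sym n (pt d) (pt a)). lra.
    - unfold y. rewrite mink_vcomb, !mink_vcomb_r, (mink_sym n (pt b) (pt c)). lra. }
  unfold x, y in Exy. rewrite mink_vcomb, !mink_vcomb_r in Exy. lra.
Qed.

Lemma exp_le_mono (x y : R) : x <= y -> exp x <= exp y.
Proof. intros [Hxy | <-]; [left; apply exp_increasing | right]; auto. Qed.

(* [sinh y >= y / (1 + y) >= exp(-1/y)], from [exp t >= 1 + t]. *)
Lemma sinh_lower (y : R) : 0 < y -> exp (- / y) <= sinh y.
Proof.
  intros Hy. unfold sinh. rewrite !exp_Ropp.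
  pose proof (exp_ineq1_le y) as HE. pose proof (exp_ineq1_le (/ y)) as HF.
  assert (Hy' : 0 < / y) by (apply Rinv_0_lt_compat; lra).
  assert (HinvF : / exp (/ y) <= y / (1 + y)).
  { replace (y / (1 + y)) with (/ (1 + / y)) by (field; lra).
    apply Rinv_le_contravar; lra. }
  assert (HinvE : / exp y <= / (1 + y)) by (apply Rinv_le_contravar; lra).
  assert (Hsplit : y / (1 + y) + y * y / (2 * (1 + y)) = ((1 + y) - / (1 + y)) / 2)
    by (field; lra).
  assert (0 <= y * y / (2 * (1 + y)))
    by (apply Rmult_le_pos; [nra | left; apply Rinv_0_lt_compat; lra]).
  lra.
Qed.

Lemma cosh_sub1_lower (x : R) : 0 < x -> 2 * exp (- (4 / x)) <= cosh x - 1.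
Proof.
  intros Hx. rewrite cosh_sinh_half.
  pose proof (sinh_lower (x / 2) ltac:(lra)) as Hs.
  replace (- (4 / x)) with (- / (x / 2) + - / (x / 2)) by (field; lra).
  rewrite exp_plus. pose proof (exp_pos (- / (x / 2))). nra.
Qed.

Lemma cosh_sub1_upper (x : R) : 0 <= x -> cosh x - 1 <= exp x / 2.
Proof.
  intros Hx. rewrite cosh_sinh_half.
  pose proof (sinh_nonneg (x / 2) ltac:(lra)).
  assert (Hs : sinh (x / 2) <= exp (x / 2) / 2)
    by (unfold sinh; pose proof (exp_pos (- (x / 2))); lra).
  replace x with (x / 2 + x / 2) at 2 by field. rewrite exp_plus. nra.
Qed.

Lemma cosh_half_sq_lower (x : R) : exp x / 4 <= cosh (x / 2) ^ 2.
Proof.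
  assert (Hc : exp (x / 2) / 2 <= cosh (x / 2))
    by (unfold cosh; pose proof (exp_pos (- (x / 2))); lra).
  pose proof (exp_pos (x / 2)).
  replace x with (x / 2 + x / 2) at 1 by field. rewrite exp_plus. nra.
Qed.

(* With [L >= 4/eps + 2 R0], the damping factor beats the endpoint displacement:
   [(cosh R0 - 1)/cosh^2(L/2) <= 2 exp(R0 - L) <= 2 exp(-4/eps) <= cosh eps - 1]. *)
Lemma displacement_estimate (eps R0 L : R) :
  0 < eps -> 0 <= R0 -> 4 / eps + 2 * R0 <= L ->
  (cosh R0 - 1) / cosh (L / 2) ^ 2 <= cosh eps - 1.
Proof.
  intros Heps HR HL.
  pose proof (cosh_sub1_upper R0 HR) as Hnum.
  pose proof (cosh_half_sq_lower L) as Hden.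
  pose proof (cosh_sub1_lower eps Heps) as Heps1.
  assert (Hexp : exp R0 <= exp (- (4 / eps)) * exp L).
  { rewrite <- exp_plus. apply exp_le_mono. lra. }
  pose proof (exp_pos L).
  assert (0 <= cosh R0 - 1) by (rewrite cosh_sinh_half; nra).
  apply Rle_trans with ((exp R0 / 2) / (exp L / 4)).
  - apply Rmult_le_compat; try lra.
    + left. apply Rinv_0_lt_compat. nra.
    + apply Rinv_le_contravar; lra.
  - apply Rle_trans with (2 * exp (- (4 / eps))); [|exact Heps1].
    apply (Rmult_le_reg_r (exp L / 4)); [lra|].
    unfold Rdiv at 1. rewrite Rmult_assoc, Rinv_l by lra. lra.
Qed.

(* The involution makes the two cross distances
   [d(v1, s v2)] and [d(v2, s v1)] equal, so the quadrilateral inequality bounds them. *)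
Lemma involution_midpoint_displacement {n : nat} (v1 v2 m : Hn n) (s : Hn n -> Hn n) :
  is_midpoint v1 v2 m -> is_isometry s -> is_involution s ->
  cosh (hdist m (s m))
  <= 1 + (cosh (hdist v1 (s v1)) + cosh (hdist v2 (s v2)) - 2)
         / (2 * cosh (hdist v1 v2 / 2) ^ 2).
Proof.
  intros Hm Hs Hinv.
  set (h := cosh (hdist v1 v2 / 2)).
  assert (Hh : 1 <= h) by apply cosh_ge_1.
  assert (Hcross : hdist v1 (s v2) = hdist v2 (s v1)).
  { rewrite <- Hs, Hinv, hdist_sym. reflexivity. }
  assert (Hmid := cosh_dist_midpoints v1 v2 m (s v1) (s v2) (s m)
                    Hm (isometry_midpoint s v1 v2 m Hs Hm) (Hs v1 v2)).
  assert (Hdiag := cosh_diagonal_ineq v1 v2 (s v1) (s v2) Hcross).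
  assert (HL : cosh (hdist v1 v2) = 2 * h ^ 2 - 1).
  { unfold h. rewrite <- cosh_double. f_equal. field. }
  rewrite (hdist_sym (s v2) (s v1)), Hs, (hdist_sym (s v2) v2), HL in Hdiag.
  rewrite Hmid, <- Hcross. fold h.
  assert (Hunit : h ^ 2 * / h ^ 2 = 1) by (field; lra).
  assert (0 < / h ^ 2) by (apply Rinv_0_lt_compat; nra).
  unfold Rdiv. rewrite !Rinv_mult. nra.
Qed.

Theorem mainTheorem4 (n : nat) (eps R0 : R) (v1 v2 m : Hn n) (s : Hn n -> Hn n) :
  0 < eps -> 0 <= R0 ->
  is_midpoint v1 v2 m ->
  is_isometry s -> is_involution s ->
  hdist v1 (s v1) <= R0 -> hdist v2 (s v2) <= R0 ->
  Lambda eps R0 <= hdist v1 v2 ->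
  hdist m (s m) <= eps.
Proof.
  intros Heps HR Hm Hs Hinv H1 H2 HL. unfold Lambda in HL.
  assert (Hdisp := involution_midpoint_displacement v1 v2 m s Hm Hs Hinv).
  assert (C1 : cosh (hdist v1 (s v1)) <= cosh R0)
    by (apply cosh_le_mono; auto using hdist_nonneg).
  assert (C2 : cosh (hdist v2 (s v2)) <= cosh R0)
    by (apply cosh_le_mono; auto using hdist_nonneg).
  assert (Hest := displacement_estimate eps R0 (hdist v1 v2) Heps HR HL).
  pose proof (cosh_ge_1 (hdist v1 v2 / 2)) as Hh1.
  set (h := cosh (hdist v1 v2 / 2)) in *.
  assert (Hh : 0 < / h ^ 2) by (apply Rinv_0_lt_compat, pow_lt; lra).
  apply cosh_le_reflect; [apply hdist_nonneg | lra |].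
  apply (Rle_trans _ _ _ Hdisp).
  unfold Rdiv in *. rewrite Rinv_mult. nra.
Qed.
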